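(* Let $G=(V,E)$ be a graph whose vertex set $V$ is a discrete subset of $\mathbb{R}^n$ and such that every vertex has finite degree. Then $\bar\alpha(G)=\limsup_{R\to\infty}\bar\alpha(G_R)$, where $G_R$ is the finite induced subgraph of $G$ on $V_R=V\cap[-R,R]^n$.
   Context: For $A\subset V$, its density in $G$ is $\delta_G(A)=\limsup_{R\to\infty}\frac{|A\cap V_R|}{|V_R|}$ with $V_R=V\cap[-R,R]^n$. For infinite $G$, $\bar\alpha(G)=\sup\{\delta_G(A): A \text{ independent set of } G\}$; for a finite graph $F$ with vertex set $W$, $\bar\alpha(F)=\alpha(F)/|W|$ where $\alpha$ is the independence number. *)

From HB Require Import structures.
From mathcomp Require Import all_boot all_order all_algebra.
From mathcomp Require Import all_classical all_reals all_analysis.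
From mathcomp Require Import finmap.
Set Implicit Arguments. Unset Strict Implicit. Unset Printing Implicit Defensive.
Import Order.TTheory GRing.Theory Num.Theory.
Local Open Scope classical_set_scope.
Local Open Scope ring_scope.

Section Defs.
Variables (R : realType) (n : nat).
Notation pt := 'rV[R]_n.

Definition card (S : set pt) : R := (#|` fset_set S|)%fset%:R.

Definition box_part (V : set pt) (r : R) : set pt :=
  V `&` [set x | forall i : 'I_n, `|x ord0 i| <= r].

Definition independent (V : set pt) (E : pt -> pt -> Prop) (A : set pt) : Prop :=
  A `<=` V /\ (forall u v, A u -> A v -> ~ E u v).

Definition limsup_pinfty (f : R -> \bar R) : \bar R :=
  ereal_inf [set ereal_sup [set f r | r in [set r | M <= r]] | M in [set: R]].

Definition density (V : set pt) (A : set pt) : \bar R :=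
  limsup_pinfty (fun r => (card (A `&` box_part V r) / card (box_part V r))%:E).

Definition alpha_bar (V : set pt) (E : pt -> pt -> Prop) : \bar R :=
  ereal_sup [set density V A | A in independent V E].

Definition alpha_fin (W : set pt) (E : pt -> pt -> Prop) : \bar R :=
  ereal_sup [set (card A)%:E | A in independent W E].

Definition alpha_bar_fin (W : set pt) (E : pt -> pt -> Prop) : \bar R :=
  (alpha_fin W E * ((card W)^-1)%:E)%E.

End Defs.

From Pilot Require Import Defs.
From HB Require Import structures.
From mathcomp Require Import all_boot all_order all_algebra.
From mathcomp Require Import all_classical all_reals all_analysis.
From mathcomp Require Import finmap lra.
Import Order.TTheory GRing.Theory Num.Theory.
Local Open Scope classical_set_scope.
Local Open Scope ring_scope.
Set Implicit Arguments. Unset Strict Implicit.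

(* One inequality holds radius by radius: an independent set of G meets V_R in
   an independent set of G_R.  Conversely let c < c' be below the limsup.  If
   |V_R| is bounded, V is finite and one independent set I of some G_R with
   |I| > c'|V_R| already has density > c'.  Otherwise pick radii
   s_0 < R_0 <= s_1 < R_1 <= ... such that |V_(s_k)| < (c' - c)|V_(R_k)|, some
   independent set I_k of G_(R_k) has more than c'|V_(R_k)| elements, and, the
   degrees being finite, every neighbour of V_(R_k) lies in V_(s_(k+1)).  Then
   the sets I_k \ V_(s_k) are pairwise non-adjacent, so their union is
   independent, and its proportion in V_(R_k) is at least c for every k. *)

Section LimsupPinfty.
Variable R : realType.
Implicit Types (f g : R -> \bar R) (x : \bar R).

Lemma le_limsup_pinfty f g :
  (forall r, (f r <= g r)%E) -> (limsup_pinfty f <= limsup_pinfty g)%E.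
Proof.
move=> fg; apply: le_ereal_inf_tmp => _ [M _ <-].
apply: ge_ereal_inf; exists (ereal_sup [set f r | r in [set r | M <= r]]).
  by exists M.
apply: ge_ereal_sup => _ [r Mr <-]; apply: le_trans (fg r) _.
by apply: ereal_sup_ubound; exists r.
Qed.

Lemma limsup_pinfty_ge f x :
  (forall M, exists2 r, M <= r & (x <= f r)%E) -> (x <= limsup_pinfty f)%E.
Proof.
move=> xf; apply: le_ereal_inf_tmp => _ [M _ <-].
have [r Mr xfr] := xf M; apply: le_trans xfr _.
by apply: ereal_sup_ubound; exists r.
Qed.

Lemma limsup_pinfty_gt f x :
  (x < limsup_pinfty f)%E -> forall M, exists2 r, M <= r & (x < f r)%E.
Proof.
move=> xf M.
have : (x < ereal_sup [set f r | r in [set r | (M <= r)%R]])%E.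
  by apply: lt_le_trans xf _; apply: ereal_inf_lbound; exists M.
by move=> /ereal_sup_gt [_ [r Mr <-] xfr]; exists r.
Qed.

Lemma EFin_between (a b : \bar R) :
  (a < b)%E -> exists2 r : R, (a < r%:E)%E & (r%:E < b)%E.
Proof.
case: a => [x| |]; case: b => [y| |] //=.
- by rewrite lte_fin => /midf_lt [xm my]; exists ((x + y) / 2); rewrite lte_fin.
- by move=> _; exists (x + 1); rewrite ?lte_fin ?ltrDl ?ltry.
- by move=> _; exists (y - 1); rewrite ?lte_fin ?ltNyr ?gtrDl ?ltrN10.
- by move=> _; exists 0; rewrite ?ltNyr ?ltry.
Qed.

Lemma lee_by_EFin (a b : \bar R) :
  (forall c : R, (c%:E < a)%E -> (c%:E <= b)%E) -> (a <= b)%E.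
Proof.
move=> ab; rewrite leNgt; apply/negP => /EFin_between [c bc ca].
by have := ab c ca; rewrite leNgt bc.
Qed.

End LimsupPinfty.

Lemma nat_valued_max_or_unbounded (R : archiRealDomainType) (T : Type) (t : T)
    (g : T -> nat) :
  (exists t0, forall t, (g t <= g t0)%N) \/ (forall x : R, exists t, x < (g t)%:R).
Proof.
case: (pselect (exists x : R, forall t, (g t)%:R <= x)) => [[x gx]|unb]; last first.
  right => x; have /existsNP [s] := (forallNP _).2 unb x.
  by exists s; rewrite ltNge; apply/negP.
left; have x_ge0 : 0 <= x by apply: le_trans (gx t).
pose P m := `[< exists s, g s = m >].
have exP : exists m, P m by exists (g t); apply/asboolP; exists t.
have ubP m : P m -> (m <= Num.Def.archi_bound x)%N.
  move=> /asboolP [s <-]; apply: ltnW; rewrite -(ltr_nat R).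
  exact: le_lt_trans (gx s) (archi_boundP x_ge0).
case: (ex_maxnP exP ubP) => _ /asboolP [t0 <-] t0_max.
by exists t0 => s; apply: t0_max; apply/asboolP; exists s.
Qed.

Section BoxParts.
Variables (R : realType) (n : nat).
Implicit Types (S T V : set 'rV[R]_n) (r : R).

Lemma card_ge0 S : 0 <= Defs.card S.
Proof. by rewrite /Defs.card ler0n. Qed.

Lemma le_card S T : finite_set T -> S `<=` T -> Defs.card S <= Defs.card T.
Proof.
move=> finT ST; rewrite /Defs.card ler_nat; apply: fsubset_leq_card.
by rewrite -fset_set_sub //; exact: sub_finite_set finT.
Qed.

Lemma card_setU_le S T : finite_set S -> finite_set T ->
  Defs.card (S `|` T) <= Defs.card S + Defs.card T.
Proof.
move=> finS finT; rewrite /Defs.card fset_setU // -natrD ler_nat.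
exact: (leq_card_fsetU _ _).1.
Qed.

Lemma box_part_sub V r : box_part V r `<=` V.
Proof. by move=> x []. Qed.

Lemma le_box_part V r1 r2 : r1 <= r2 -> box_part V r1 `<=` box_part V r2.
Proof. by move=> r12 x [Vx Hx]; split=> // i; exact: le_trans (Hx i) r12. Qed.

Lemma finite_set_sub_box_part V S :
  S `<=` V -> finite_set S -> exists r, S `<=` box_part V r.
Proof.
move=> SV finS.
exists (\big[Order.max/0]_(x <- fset_set S) \big[Order.max/0]_(i < n) `|x ord0 i|).
move=> x Sx; split; first exact: SV.
move=> i; apply: le_trans (le_bigmax_seq _ x xpredT _ _ _) => //; last first.
  by rewrite in_fset_set //; exact: mem_set.
exact: (le_bigmax _ (fun i => `|x ord0 i|) i).
Qed.

End BoxParts.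

Section Graph.
Variables (R : realType) (n : nat) (V : set 'rV[R]_n) (E : 'rV[R]_n -> 'rV[R]_n -> Prop).
Hypothesis finite_box : forall r : R, finite_set (box_part V r).
Hypothesis edge_in_V : forall u v, E u v -> V u /\ V v.
Hypothesis edge_sym : forall u v, E u v -> E v u.
Hypothesis finite_degree : forall v, V v -> finite_set [set w | E v w].

Local Notation N r := (Defs.card (box_part V r)).
Local Notation alpha_box r := (alpha_bar_fin (box_part V r) E).

Lemma independent_setI_box_part A r :
  independent V E A -> independent (box_part V r) E (A `&` box_part V r).
Proof.
by move=> [_ A_ind]; split=> [|u v [Au _] [Av _]]; [exact: subIsetr | exact: A_ind].
Qed.

Lemma density_ge0 A : (0 <= density V A)%E.
Proof.
apply: limsup_pinfty_ge => M; exists M => //.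
by rewrite lee_fin divr_ge0 // card_ge0.
Qed.

Lemma density_le_alpha_bar A : independent V E A -> (density V A <= alpha_bar V E)%E.
Proof. by move=> A_ind; apply: ereal_sup_ubound; exists A. Qed.

Lemma alpha_bar_ge0 : (0 <= alpha_bar V E)%E.
Proof.
apply: le_trans (density_ge0 set0) (density_le_alpha_bar _).
by split=> // u v [].
Qed.

Lemma alpha_bar_le_limsup : (alpha_bar V E <= limsup_pinfty (fun r => alpha_box r))%E.
Proof.
apply: ge_ereal_sup => _ [A A_ind <-]; apply: le_limsup_pinfty => r.
rewrite /alpha_bar_fin EFinM; apply: lee_wpmul2r.
  by rewrite lee_fin invr_ge0 card_ge0.
apply: ereal_sup_ubound; exists (A `&` box_part V r) => //.
exact: independent_setI_box_part.
Qed.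

Lemma le_density A c :
  (forall M, exists2 r, M <= r &
     0 < N r /\ c * N r <= Defs.card (A `&` box_part V r)) ->
  (c%:E <= density V A)%E.
Proof.
move=> Ac; apply: limsup_pinfty_ge => M.
have [r Mr [Nr_gt0 cN]] := Ac M; exists r => //.
by rewrite lee_fin ler_pdivlMr.
Qed.

Lemma alpha_box_gt c r : 0 <= c -> (c%:E < alpha_box r)%E ->
  0 < N r /\ exists2 I, independent (box_part V r) E I & c * N r < Defs.card I.
Proof.
move=> c_ge0 c_lt.
have Nr_gt0 : 0 < N r.
  rewrite lt0r card_ge0 andbT; apply: contraTneq c_lt; rewrite /alpha_bar_fin => ->.
  by rewrite invr0 mule0 -leNgt lee_fin.
split=> //; apply: contrapT => no_I; move: c_lt; apply/negP; rewrite -leNgt.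
have -> : c%:E = ((c * N r)%:E * ((N r)^-1)%:E)%E by rewrite -EFinM mulfK ?gt_eqF.
apply: lee_wpmul2r; first by rewrite lee_fin invr_ge0 ltW.
apply: ge_ereal_sup => _ [I I_ind <-]; rewrite lee_fin leNgt; apply/negP => cI.
by apply: no_I; exists I.
Qed.

Lemma box_part_neighbours r :
  exists S, r <= S /\ forall u v, box_part V r u -> E u v -> box_part V S v.
Proof.
pose Nbr := \bigcup_(u in box_part V r) [set w | E u w].
have NbrV : Nbr `<=` V by move=> w [u _ Euw]; exact: (edge_in_V Euw).2.
have finNbr : finite_set Nbr.
  by apply: bigcup_finite => // u /box_part_sub Vu; exact: finite_degree.
have [S NbrS] := finite_set_sub_box_part NbrV finNbr.
exists (Order.max r S); split; first by rewrite le_max lexx.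
move=> u v ru Euv; apply: le_box_part (NbrS v _); first by rewrite le_max lexx orbT.
by exists u.
Qed.

Lemma alpha_bar_ge_of_max_box c r0 : 0 <= c ->
  (c%:E < limsup_pinfty (fun r => alpha_box r))%E ->
  (forall r, N r <= N r0) -> (c%:E <= alpha_bar V E)%E.
Proof.
move=> c_ge0 c_lt r0_max.
have [r r0r c_lt_r] := limsup_pinfty_gt c_lt r0.
have [Nr_gt0 [I [I_sub I_ind] cI]] := alpha_box_gt c_ge0 c_lt_r.
have I_indV : independent V E I.
  by split=> //; exact: subset_trans I_sub (@box_part_sub _ _ V r).
apply: le_trans (density_le_alpha_bar I_indV); apply: le_density => M.
have rt : r <= Order.max M r by rewrite le_max lexx orbT.
exists (Order.max M r); first by rewrite le_max lexx.
have -> : N (Order.max M r) = N r.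
  apply/eqP; rewrite eq_le; apply/andP; split.
    by apply: le_trans (r0_max _) _; exact/le_card/le_box_part.
  exact/le_card/le_box_part.
by rewrite setIidl; [split=> //; exact: ltW | exact: subset_trans I_sub (le_box_part rt)].
Qed.

Section Gluing.
Variables (c : R) (s r : nat -> R) (I : nat -> set 'rV[R]_n).
Hypothesis s_nondecreasing : {homo s : j k / (j <= k)%N >-> j <= k}.
Hypothesis r_ge : forall k, k%:R <= r k.
Hypothesis I_ind : forall k, independent (box_part V (r k)) E (I k).
Hypothesis N_gt0 : forall k, 0 < N (r k).
Hypothesis I_large : forall k, c * N (r k) + N (s k) <= Defs.card (I k).
Hypothesis box_neighbours :
  forall k u v, box_part V (r k) u -> E u v -> box_part V (s k.+1) v.

Definition glued := [set x | exists k, (I k `\` box_part V (s k)) x].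

Lemma glued_independent : independent V E glued.
Proof.
have cross j k u v : (j < k)%N ->
    (I j `\` box_part V (s j)) u -> (I k `\` box_part V (s k)) v -> ~ E u v.
  move=> jk [Iu _] [_ v_out] Euv; apply: v_out.
  exact: le_box_part (s_nondecreasing jk) _ (box_neighbours ((I_ind j).1 _ Iu) Euv).
split=> [x [k [Ix _]]|u v [j Iu] [k Iv] Euv].
  exact: box_part_sub ((I_ind k).1 _ Ix).
case: (ltngtP j k) => [jk|kj|jk].
- exact: cross jk Iu Iv Euv.
- exact: cross kj Iv Iu (edge_sym Euv).
- by subst k; exact: (I_ind j).2 _ _ Iu.1 Iv.1 Euv.
Qed.

Lemma glued_density : (c%:E <= density V glued)%E.
Proof.
apply: le_density => M; pose k := Num.Def.archi_bound `|M|.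
exists (r k).
  exact: le_trans (ler_norm M) (le_trans (ltW (archi_boundP _)) (r_ge k)).
split; first exact: N_gt0.
have finI : finite_set (I k) := sub_finite_set (I_ind k).1 (finite_box _).
have fin_new : finite_set (I k `\` box_part V (s k)) :=
  sub_finite_set (@subDsetl _ _ _) finI.
have I_split : Defs.card (I k) <= Defs.card (I k `\` box_part V (s k)) + N (s k).
  apply: le_trans (card_setU_le fin_new (finite_box _)).
  apply: le_card; first by rewrite finite_setU; split.
  by move=> x Ix; case: (pselect (box_part V (s k) x)) => ?; [right|left].
have new_in_glued :
    Defs.card (I k `\` box_part V (s k)) <= Defs.card (glued `&` box_part V (r k)).
  apply: le_card; first exact: sub_finite_set (@subIsetr _ _ _) (finite_box _).
  by move=> x [Ix Ix']; split; [exists k | exact: (I_ind k).1].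
have := I_large k; lra.
Qed.

End Gluing.

Lemma alpha_bar_ge_of_unbounded_box c : 0 <= c ->
  (c%:E < limsup_pinfty (fun r => alpha_box r))%E ->
  (forall x, exists r, x < N r) -> (c%:E <= alpha_bar V E)%E.
Proof.
move=> c_ge0 c_lt unb.
have [c' c_lt_c' c'_lt] := EFin_between c_lt; rewrite lte_fin in c_lt_c'.
have step t : exists p : R * set 'rV[R]_n, [/\ t + 1 <= p.1, 0 < N p.1,
    independent (box_part V p.1) E p.2 & c * N p.1 + N t <= Defs.card p.2].
  have [r1 Nr1] := unb (N t / (c' - c)).
  have [r tr c'_lt_r] := limsup_pinfty_gt c'_lt (Order.max (t + 1) r1).
  have [Nr_gt0 [J J_ind c'J]] := alpha_box_gt (le_trans c_ge0 (ltW c_lt_c')) c'_lt_r.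
  exists (r, J); split=> //=; first by apply: le_trans tr; rewrite le_max lexx.
  have : N t < (c' - c) * N r.
    rewrite mulrC -ltr_pdivrMr ?subr_gt0 //; apply: lt_le_trans Nr1 _.
    by apply/le_card/le_box_part => //; apply: le_trans tr; rewrite le_max lexx orbT.
  lra.
have [next next_spec] := choice step.
have [nbr nbr_spec] := choice box_part_neighbours.
pose s k := iter k (fun t => nbr (next t).1) 0.
pose r k := (next (s k)).1.
pose I k := (next (s k)).2.
have r_s k : s k + 1 <= r k by have [] := next_spec (s k).
have s_r k : r k <= s k.+1 by have [] := nbr_spec (r k).
have s_nondecreasing : {homo s : j k / (j <= k)%N >-> j <= k}.
  apply/nondecreasing_seqP => k; apply: le_trans (s_r k); apply: le_trans (r_s k).
  by rewrite lerDl.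
have s_ge k : k%:R <= s k.
  elim: k => [//|k IHk]; rewrite -natr1; apply: le_trans (s_r k).
  by apply: le_trans (r_s k); rewrite lerD2r.
have r_ge k : k%:R <= r k.
  by apply: le_trans (s_ge k) (le_trans _ (r_s k)); rewrite lerDl.
have N_gt0 k : 0 < N (r k) by have [] := next_spec (s k).
have I_ind k : independent (box_part V (r k)) E (I k) by have [] := next_spec (s k).
have I_large k : c * N (r k) + N (s k) <= Defs.card (I k).
  by have [] := next_spec (s k).
have box_nbrs k u v : box_part V (r k) u -> E u v -> box_part V (s k.+1) v.
  by have [_] := nbr_spec (r k); exact.
apply: le_trans (density_le_alpha_bar (glued_independent s_nondecreasing I_ind box_nbrs)).
exact: glued_density r_ge I_ind N_gt0 I_large.
Qed.

End Graph.

Theorem lemma1 (R : realType) (n : nat) (V : set 'rV[R]_n)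
  (E : 'rV[R]_n -> 'rV[R]_n -> Prop)
  (HV_discrete : forall r : R, finite_set (box_part V r))
  (HE_V : forall u v, E u v -> V u /\ V v)
  (HE_sym : forall u v, E u v -> E v u)
  (HE_irr : forall u, ~ E u u)
  (Hdeg : forall v, V v -> finite_set [set w | E v w]) :
  alpha_bar V E =
  limsup_pinfty (fun r => alpha_bar_fin (box_part V r) E).
Proof.
apply/eqP; rewrite eq_le alpha_bar_le_limsup /=.
apply: lee_by_EFin => c c_lt.
have [c_lt0|c_ge0] := ltP c 0.
  by apply: le_trans (alpha_bar_ge0 V E); rewrite lee_fin ltW.
have [[r0 r0_max]|unb] :=
  @nat_valued_max_or_unbounded R _ 0 (fun r => #|` fset_set (box_part V r)|%fset).
- by apply: (alpha_bar_ge_of_max_box HV_discrete c_ge0 c_lt) => r; rewrite ler_nat.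
- apply: (alpha_bar_ge_of_unbounded_box HV_discrete HE_V HE_sym Hdeg c_ge0 c_lt).
  exact: unb.
Qed.
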